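(* Let $N\ge 3$, let $k$ be a positive odd integer, $l=k2^N$, let $m$ be a positive integer and $n=l+m$. For a positive integer $a$ let $g(a)=(-1)^{a-1}\frac{(2a-3)!!}{2a}$. Then $$g(n)\equiv g(m)+\begin{cases}(-1)^{\frac{m-1}{2}}\frac{l}{2}\pmod{2^{N+1}}, & \text{if } 2\nmid m,\\ l+\frac{l}{2mn}\pmod{2^{N+1}}, & \text{if } 2\mid m,\ 4\nmid m,\\ l-\frac{l}{2mn}\pmod{2^{N+1}}, & \text{if } 4\mid m,\ 8\nmid m.\end{cases}$$
   Context: For a positive odd integer $b$, $b!!=b(b-2)\cdots3\cdot1$, and $(-1)!!=1$. Congruences between rational numbers modulo $2^{N+1}$ mean the difference has $2$-adic valuation $\ge N+1$. *)

From HB Require Import structures.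
From mathcomp Require Import all_boot all_order all_algebra.
Set Implicit Arguments. Unset Strict Implicit. Unset Printing Implicit Defensive.
Import Order.TTheory GRing.Theory Num.Theory.

Fixpoint dfact (b : nat) : nat :=
  match b with
  | 0 => 1
  | 1 => 1
  | b'.+2 => b'.+2 * dfact b'
  end.

Local Open Scope ring_scope.

(* g(a) = (-1)^(a-1) (2a-3)!! / (2a).  For a = 1, (2a-3)!! = (-1)!! = 1;
   with truncated nat subtraction 2*1-3 = 0 and dfact 0 = 1, as required. *)
Definition g (a : nat) : rat :=
  (-1) ^+ (a - 1)%N * (dfact (2 * a - 3)%N)%:R / (2 * a)%:R.

Definition v2_ge (e : nat) (q : rat) : bool :=
  (q == 0) ||
  (e + logn 2 `|denq q|%N <= logn 2 `|numq q|%N)%N.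

(* x = y (mod 2^(N+1)) for rationals: v2 (x - y) >= N+1. *)
Definition cong2 (N : nat) (x y : rat) : Prop := v2_ge N.+1 (x - y).

From mathcomp Require Import all_boot all_order all_algebra ring lra zify.
Import Order.TTheory GRing.Theory Num.Theory.
Local Open Scope ring_scope.

(* Let [P = (2n-3)!! / (2m-3)!!], the product of the [l] odd numbers from [2m-1] on.
   As [l] is even, [g n = g m * m P / n], so everything rests on the congruence
   [P = 1 + 2l(1 + (m-1)^2)] modulo [2^(N+4)], valid for every [l = k 2^N] with [N >= 3].
   For the product starting at [1] it is proved for [l = 2^N] by induction on [N]
   (doubling, together with the reflection [x -> -x] and the fact that odd squares are
   [1] modulo [8]), then for [l = k 2^N] by induction on [k]; it is then moved to an
   arbitrary odd starting point.  Inserting it, [g n] minus the right-hand side becomes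
   [2^(N+1)] times a fraction with odd denominator as soon as [(2m-3)!!] is known modulo
   [4], [16] or [64] respectively in the three cases. *)

Definition prod_step2 (l : nat) (a : int) : int := \prod_(j < l) (a + 2 * j%:Z).

Lemma prod_step2_0 a : prod_step2 0 a = 1.
Proof. by rewrite /prod_step2 big_ord0. Qed.

Lemma prod_step2_recr l a : prod_step2 l.+1 a = prod_step2 l a * (a + 2 * l%:Z).
Proof. by rewrite /prod_step2 big_ord_recr. Qed.

Lemma prod_step2_recl l a : prod_step2 l.+1 a = a * prod_step2 l (a + 2).
Proof.
rewrite /prod_step2 big_ord_recl /= mulr0 addr0; congr (_ * _).
by apply: eq_bigr => i _; rewrite /bump /= PoszD; ring.
Qed.

Lemma prod_step2D l1 l2 a :
  prod_step2 (l1 + l2) a = prod_step2 l1 a * prod_step2 l2 (a + 2 * l1%:Z).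
Proof.
rewrite /prod_step2 big_split_ord /=; congr (_ * _).
by apply: eq_bigr => i _; rewrite /= PoszD; ring.
Qed.

Lemma prod_step2_reflect l a :
  prod_step2 l a = (-1) ^+ l * prod_step2 l (- a - 2 * l%:Z + 2).
Proof.
elim: l a => [|l IH] a; first by rewrite !prod_step2_0 expr0 mulr1.
rewrite prod_step2_recl IH prod_step2_recr exprS.
have -> : - (a + 2) - 2 * l%:Z + 2 = - a - 2 * l.+1%:Z + 2 by rewrite intS; ring.
by rewrite intS; ring.
Qed.

Lemma dfact_prod_step2 i : (dfact (2 * i - 1))%:Z = prod_step2 i 1.
Proof.
elim: i => [|i IH]; first by rewrite prod_step2_0.
rewrite prod_step2_recr -IH; case: i {IH} => [//|i].
have -> : (2 * i.+2 - 1 = (2 * i.+1 - 1).+2)%N by lia.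
rewrite /= PoszM mulrC; congr (_ * _); lia.
Qed.

Lemma mul_succ_even (n : nat) : exists h : int, n%:Z * (n%:Z + 1) = 2 * h.
Proof.
elim: n => [|n [h IH]]; first by exists 0.
exists (h + n%:Z + 1); rewrite intS.
transitivity (n%:Z * (n%:Z + 1) + 2 * (n%:Z + 1)); first ring.
by rewrite IH; ring.
Qed.

(* To first order in [c] the product gains the factor [1 + c sum_i 1/(2i+1)], and
   [1/(2i+1) = 2i+1] modulo [8] since odd squares are [1] modulo [8]; finally
   [sum_(i < n) (2i+1) = n^2]. *)
Lemma prod_step2_perturb (c M u w : int) : 8 * c = M * u -> c * c = M * w ->
  forall n : nat, exists y,
    prod_step2 n (1 + c) = prod_step2 n 1 * (1 + c * n%:Z ^+ 2) + M * y.
Proof.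
move=> cu cw; elim=> [|n [y IH]]; first by exists 0; rewrite !prod_step2_0; ring.
have [h hE] := mul_succ_even n.
rewrite !prod_step2_recr; set p := prod_step2 n 1.
exists (y * (1 + c + 2 * n%:Z) - p * u * h + p * w * n%:Z ^+ 2).
have -> : prod_step2 n (1 + c) * (1 + c + 2 * n%:Z) =
    p * (1 + 2 * n%:Z) * (1 + c * (1 + n%:Z) ^+ 2) + M * y * (1 + c + 2 * n%:Z)
    - p * c * 4 * (n%:Z * (n%:Z + 1)) + p * (c * c) * n%:Z ^+ 2.
  by rewrite IH; ring.
rewrite hE cw (_ : p * c * 4 * (2 * h) = p * (8 * c) * h); last by ring.
by rewrite cu intS; ring.
Qed.

(* Moving the start from [2i+1] to [2i+3] multiplies by [1 + 2l/(2i+1)], that is by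
   [1 + 2l(2i+1)] up to the error terms, again because odd squares are [1] modulo [8]. *)
Lemma prod_step2_shift_cong (l : nat) (d c x : int) : l%:Z = 4 * d * c ->
  prod_step2 l 1 = 1 + 2 * l%:Z + 64 * d * x ->
  forall i : nat, exists y,
    prod_step2 l (2 * i%:Z + 1) = 1 + 2 * l%:Z * (1 + i%:Z ^+ 2) + 64 * d * y.
Proof.
move=> lE P1; elim=> [|i [y IH]]; first by exists x; rewrite mulr0 add0r P1; ring.
case: l lE P1 IH => [|l] lE P1 IH; first by exists 0; rewrite prod_step2_0; ring.
rewrite intS in lE IH *; rewrite prod_step2_recl in IH.
rewrite (_ : 2 * (1 + i%:Z) + 1 = 2 * i%:Z + 1 + 2); last by ring.
rewrite prod_step2_recr; set R := prod_step2 l _.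
have [h hE] := mul_succ_even i.
have -> : R * (2 * i%:Z + 1 + 2 + 2 * l%:Z) =
    ((2 * i%:Z + 1) * R) * (1 + 2 * (1 + l%:Z) * (2 * i%:Z + 1))
    - 2 * (1 + l%:Z) * R * 4 * (i%:Z * (i%:Z + 1)) by ring.
rewrite IH hE !lE.
exists (y * (1 + 2 * (4 * d * c) * (2 * i%:Z + 1))
  + d * c ^+ 2 * (2 * i%:Z + 1) * (1 + i%:Z ^+ 2) - c * R * h).
ring.
Qed.

Lemma expn2_ge3 {N} : (3 <= N)%N -> (2 ^ N = 8 * 2 ^ (N - 3))%N.
Proof. by move=> N3; rewrite -{1}(subnK N3) expnD mulnC. Qed.

(* Doubling [L = 2^N]: [prod_step2 (2L) 1 = prod_step2 L 1 * prod_step2 L (1 + 2L)],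
   and as [L] is even, reflection turns the second factor into [prod_step2 L (1 - 4L)],
   which is [prod_step2 L 1 * (1 - 4L^3)] by [prod_step2_perturb]. *)
Lemma prod_step2_pow2 {N} : (3 <= N)%N ->
  exists x, prod_step2 (2 ^ N) 1 = 1 + 2 * (2 ^ N)%:Z + 16 * (2 ^ N)%:Z * x.
Proof.
elim: N => [//|N IH] N3.
have [N2 | N3'] := ltnP N 3.
  have -> : N = 2%N by lia.
  exists 15836; rewrite /prod_step2 !big_ord_recr big_ord0 /=; ring.
have [x Px] := IH N3'.
set L := (2 ^ (N - 3))%:Z.
have L8 : (2 ^ N)%:Z = 8 * L by rewrite (expn2_ge3 N3') PoszM.
rewrite expnS mul2n -addnn prod_step2D [prod_step2 _ (1 + _)]prod_step2_reflect.
have -> : (-1) ^+ (2 ^ N) = 1 :> int.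
  by rewrite -signr_odd oddX orbF (_ : (N == 0) = false) //; apply/eqP; lia.
have -> : - (1 + 2 * (2 ^ N)%:Z) - 2 * (2 ^ N)%:Z + 2 = 1 + (- 4 * (2 ^ N)%:Z) by ring.
have [y Py] := prod_step2_perturb (- 4 * (2 ^ N)%:Z) (32 * (2 ^ N)%:Z) (-1) (4 * L)
  ltac:(rewrite L8; ring) ltac:(rewrite L8; ring) (2 ^ N).
rewrite mul1r Py Px PoszD L8.
set E := 1 + 2 * (8 * L) + 16 * (8 * L) * x.
exists (x + L * (1 + 8 * x) ^+ 2 - 8 * L * L * E ^+ 2 + y * E).
by rewrite /E; ring.
Qed.

Lemma prod_step2_pow2_mul {N} k : (3 <= N)%N ->
  exists x, prod_step2 (k * 2 ^ N) 1 = 1 + 2 * (k * 2 ^ N)%:Z + 16 * (2 ^ N)%:Z * x.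
Proof.
move=> N3; have [x0 P0] := prod_step2_pow2 N3.
set L := (2 ^ (N - 3))%:Z.
have L8 : (2 ^ N)%:Z = 8 * L by rewrite (expn2_ge3 N3) PoszM.
have shift := @prod_step2_shift_cong (2 ^ N) (2 * L) 1 x0
  ltac:(rewrite L8; ring) ltac:(rewrite P0 L8; ring).
elim: k => [|k [x IH]]; first by exists 0; rewrite mul0n prod_step2_0; ring.
rewrite mulSnr prod_step2D IH.
have [y Py] := shift (k * 2 ^ N)%N.
rewrite (_ : 1 + 2 * (k * 2 ^ N)%:Z = 2 * (k * 2 ^ N)%:Z + 1); last by ring.
rewrite Py !PoszD !PoszM L8.
exists (x + y + k%:Z ^+ 2 * L * (8 * L)
  + 2 * L * (k%:Z + 8 * x) * (1 + k%:Z ^+ 2 * (8 * L) ^+ 2 + 8 * y)).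
ring.
Qed.

Lemma prod_step2_pow2_mul_cong {N} k i : (3 <= N)%N ->
  exists x, prod_step2 (k * 2 ^ N) (2 * i%:Z + 1) =
    1 + 2 * (k * 2 ^ N)%:Z * (1 + i%:Z ^+ 2) + 16 * (2 ^ N)%:Z * x.
Proof.
move=> N3; have [x0 P0] := prod_step2_pow2_mul k N3.
set L := (2 ^ (N - 3))%:Z.
have L8 : (2 ^ N)%:Z = 8 * L by rewrite (expn2_ge3 N3) PoszM.
have [y Py] := @prod_step2_shift_cong (k * 2 ^ N) (2 * L) k x0
  ltac:(rewrite PoszM L8; ring) ltac:(rewrite P0 L8; ring) i.
by exists y; rewrite Py L8; ring.
Qed.

Lemma dfact_add2 b : dfact (b + 2) = ((b + 2) * dfact b)%N.
Proof. by rewrite addn2. Qed.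

Lemma dfact_4mul_add1 j : exists y : int, (dfact (4 * j + 1))%:Z = (-1) ^+ j + 4 * y.
Proof.
elim: j => [|j [y IH]]; first by exists 0.
rewrite (_ : (4 * j.+1 + 1 = 4 * j + 1 + 2 + 2)%N); last by lia.
rewrite !dfact_add2 !PoszM IH exprS.
exists (4 * (j%:Z + 1) ^+ 2 * (-1) ^+ j - y + 16 * (j%:Z + 1) ^+ 2 * y).
by rewrite !PoszD ?PoszM; ring.
Qed.

Lemma dfact_8mul_add1 j : exists y : int, (dfact (8 * j + 1))%:Z = 1 + 16 * y.
Proof.
elim: j => [|j [y IH]]; first by exists 0.
rewrite (_ : (8 * j.+1 + 1 = 8 * j + 1 + 2 + 2 + 2 + 2)%N); last by lia.
rewrite !dfact_add2 !PoszM IH.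
pose r : int := 16 * (4 * j%:Z ^+ 2 + 6 * j%:Z) ^+ 2 + 62 * (4 * j%:Z ^+ 2 + 6 * j%:Z) + 59.
exists (y + r + 16 * y * r).
by rewrite /r !PoszD ?PoszM; ring.
Qed.

Lemma dfact_16mul_add5 j : exists y : int,
  (dfact (16 * j + 5))%:Z = 15 + 32 * j%:Z + 64 * y.
Proof.
have [x Px] := @prod_step2_pow2_mul_cong 3 j 3 (isT : (3 <= 3)%N).
rewrite (_ : (16 * j + 5 = 2 * (3 + j * 2 ^ 3) - 1)%N); last by lia.
rewrite dfact_prod_step2 prod_step2D Px.
exists (37 * j%:Z + 30 * x).
by rewrite /prod_step2 !big_ord_recr big_ord0 /= PoszM; ring.
Qed.

Lemma v2_ge_pow2_div_odd (e : nat) (A : int) (B : nat) : odd B ->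
  v2_ge e ((2 ^ e)%:R * A%:~R / B%:R).
Proof.
move=> B_odd; set q := _ / _; rewrite /v2_ge; case: eqP => //= /eqP q0.
have B0 : (0 < B)%N by rewrite lt0n; apply: contraTneq B_odd => ->.
have A0 : A != 0.
  by apply: contra q0 => /eqP A0; rewrite /q A0 mulr0 mul0r.
have qE : numq q * B%:Z = 2 ^ e * A * denq q.
  apply: (@intr_inj rat); rewrite !intrM numqE rmorphXn /= -!pmulrn -natrX.
  by rewrite /q; field; rewrite pnatr_eq0 -lt0n.
have := congr1 (fun z => logn 2 `|z|) qE; rewrite /= !abszM abszX /=.
rewrite !lognM ?muln_gt0 ?expn_gt0 ?absz_gt0 ?numq_eq0 ?denq_eq0 ?A0 ?andbT //.
rewrite pfactorK // (@logn_coprime 2 B) ?coprime2n ?B_odd //.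
lia.
Qed.

Lemma dfact_add_prod_step2 l {m} : (0 < m)%N ->
  (dfact (2 * (l + m) - 3))%:Z =
    (dfact (2 * m - 3))%:Z * prod_step2 l (2 * (m - 1)%:Z + 1).
Proof.
move=> m0; rewrite (_ : (2 * (l + m) - 3 = 2 * ((m - 1) + l) - 1)%N); last by lia.
rewrite (_ : (2 * m - 3 = 2 * (m - 1) - 1)%N); last by lia.
by rewrite !dfact_prod_step2 prod_step2D addrC.
Qed.

Lemma g_add_even l m : (0 < m)%N -> ~~ odd l ->
  g (l + m) = g m * m%:R * (prod_step2 l (2 * (m - 1)%:Z + 1))%:~R / (l + m)%:R.
Proof.
move=> m0 l_even; have := congr1 (fun z : int => z%:~R : rat) (dfact_add_prod_step2 l m0).
rewrite /= rmorphM /= -!pmulrn /g => ->.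
rewrite (_ : (l + m - 1 = l + (m - 1))%N); last by lia.
rewrite exprD -signr_odd (negbTE l_even) expr0 mul1r !natrM.
by field; rewrite -natrD !pnatr_eq0 -!lt0n addn_gt0 m0 orbT.
Qed.

Lemma g_add_pow2_mul {N} k m : (3 <= N)%N -> (0 < m)%N ->
  exists x : int, g (k * 2 ^ N + m) = g m * m%:R *
    (1 + 2 * (k * 2 ^ N)%:R * (1 + (m - 1)%:R ^+ 2) + 16 * (2 ^ N)%:R * x%:~R)
    / (k * 2 ^ N + m)%:R.
Proof.
move=> N3 m0; have N0 : (N == 0) = false by case: N N3.
have [x Px] := prod_step2_pow2_mul_cong k (m - 1) N3.
exists x; rewrite g_add_even //; last by rewrite oddM oddX N0 andbF.
by rewrite Px /= !(rmorphD, rmorphM, rmorphXn, rmorph1) /= -!pmulrn.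
Qed.

Lemma odd_mul2S a : odd (2 * a + 1).
Proof. by rewrite oddD oddM. Qed.

Section ShiftCases.

Context {N k m : nat} {x : int}.
Hypothesis N3 : (3 <= N)%N.
Local Notation l := (k * 2 ^ N)%N.
Local Notation n := (l + m)%N.
Hypothesis g_shift : g n = g m * m%:R *
  (1 + 2 * l%:R * (1 + (m - 1)%:R ^+ 2) + 16 * (2 ^ N)%:R * x%:~R) / n%:R.

Let odd_l : odd l = false.
Proof. by case: N N3 => [//|N' _]; rewrite oddM oddX /= andbF. Qed.

Lemma cong2_odd j : m = (2 * j + 1)%N ->
  cong2 N (g n) (g m + (-1) ^+ j * (l%:R / 2)).
Proof.
move=> mE; have [y Dy] := dfact_4mul_add1 j.
have DE : dfact (4 * j + 1) = ((4 * j + 1) * dfact (2 * m - 3))%N.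
  case: j mE {Dy} => [->//|j mE].
  have -> : (4 * j.+1 + 1 = (2 * m - 3) + 2)%N by lia.
  by rewrite dfact_add2.
have signE : ((-1) ^+ j : rat) = (4 * j%:R + 1) * (dfact (2 * m - 3))%:R - 4 * y%:~R.
  move/(congr1 (fun z : int => z%:~R : rat)): Dy.
  rewrite DE -pmulrn natrM natrD natrM rmorphD rmorphXn rmorphN1 rmorphM /= => ->.
  by ring.
have sign_m1 : ((-1) ^+ (m - 1) : rat) = 1.
  by rewrite mE addnK -signr_odd oddM /= expr0.
have m1E : (m - 1)%:R = 2 * j%:R :> rat by rewrite mE addnK natrM.
pose D : int := (dfact (2 * m - 3))%:Z.
pose E : int := D * (4 * j%:Z + 1) - 4 * y.
pose A : int := k%:Z * y + 2 * k%:Z * m * D * j%:Z ^+ 2 + 4 * x * m * D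
  - E * k%:Z * j%:Z * (j%:Z + 1) - 2 * (2 ^ (N - 3))%:Z * E * k%:Z ^+ 2 * m.
have B_odd : odd (m * n) by rewrite oddM oddD odd_l mE oddD oddM.
rewrite /cong2; suff -> : g n - (g m + (-1) ^+ j * (l%:R / 2)) =
    (2 ^ N.+1)%:R * A%:~R / (m * n)%:R by exact: v2_ge_pow2_div_odd.
rewrite g_shift /g signE sign_m1 m1E /A /E /D expnS (expn2_ge3 N3).
move: (dfact _) (2 ^ (N - 3))%N => d T; rewrite mE.
field; rewrite !lt0r_neq0 //; have := ler0n rat k; have := ler0n rat T; have := ler0n rat j; nra.
Qed.

Lemma cong2_2mod4 j : m = (4 * j + 2)%N ->
  cong2 N (g n) (g m + l%:R + l%:R / (2 * m * n)%:R).
Proof.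
move=> mE; have [y Dy] := dfact_8mul_add1 j.
have DE : (dfact (2 * m - 3))%:R = 1 + 16 * y%:~R :> rat.
  rewrite (_ : (2 * m - 3 = 8 * j + 1)%N); last by lia.
  by move/(congr1 (fun z : int => z%:~R : rat)): Dy; rewrite rmorphD rmorphM -pmulrn.
have sign_m1 : ((-1) ^+ (m - 1) : rat) = -1.
  rewrite (_ : (m - 1 = 2 * (2 * j) + 1)%N); last by lia.
  by rewrite -signr_odd oddD oddM /= expr1.
have m1E : (m - 1)%:R = 4 * j%:R + 1 :> rat.
  rewrite (_ : (m - 1 = 4 * j + 1)%N); last by lia.
  by rewrite natrD natrM.
pose A : int := - k%:Z * (1 + 2 * j%:Z + 2 * j%:Z ^+ 2 + 2 * (2 ^ (N - 3))%:Z * k%:Z * (2 * j%:Z + 1))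
  - k%:Z * (3 * j%:Z + 8 * j%:Z ^+ 2 + 8 * j%:Z ^+ 3) - x * (4 * j%:Z + 2)
  - y * (7 * k%:Z + 16 * k%:Z * (3 * j%:Z + 8 * j%:Z ^+ 2 + 8 * j%:Z ^+ 3) + 16 * x * (4 * j%:Z + 2)).
(* the odd part of [m n] *)
pose B := ((2 * j + 1) * (2 * (2 * 2 ^ (N - 3) * k + j) + 1))%N.
have B_odd : odd B by rewrite oddM !odd_mul2S.
rewrite /cong2; suff -> : g n - (g m + l%:R + l%:R / (2 * m * n)%:R) =
    (2 ^ N.+1)%:R * A%:~R / B%:R by exact: v2_ge_pow2_div_odd.
rewrite g_shift /g DE sign_m1 m1E /A /B expnS (expn2_ge3 N3).
move: (2 ^ (N - 3))%N => T; rewrite mE.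
field; rewrite !lt0r_neq0 //; have := ler0n rat k; have := ler0n rat T; have := ler0n rat j; nra.
Qed.

Lemma cong2_4mod8 j : m = (8 * j + 4)%N ->
  cong2 N (g n) (g m + l%:R - l%:R / (2 * m * n)%:R).
Proof.
move=> mE; have [y Dy] := dfact_16mul_add5 j.
have DE : (dfact (2 * m - 3))%:R = 15 + 32 * j%:R + 64 * y%:~R :> rat.
  rewrite (_ : (2 * m - 3 = 16 * j + 5)%N); last by lia.
  by move/(congr1 (fun z : int => z%:~R : rat)): Dy; rewrite !rmorphD !rmorphM -!pmulrn.
have sign_m1 : ((-1) ^+ (m - 1) : rat) = -1.
  rewrite (_ : (m - 1 = 2 * (4 * j + 1) + 1)%N); last by lia.
  by rewrite -signr_odd oddD oddM /= expr1.
have m1E : (m - 1)%:R = 8 * j%:R + 3 :> rat.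
  rewrite (_ : (m - 1 = 8 * j + 3)%N); last by lia.
  by rewrite natrD natrM.
pose A' : int := -19 - 169 * j%:Z - 574 * j%:Z ^+ 2 - 880 * j%:Z ^+ 3 - 512 * j%:Z ^+ 4
  - (2 ^ (N - 3))%:Z * k%:Z * (2 * j%:Z + 1).
pose A : int := - (15 + 32 * j%:Z) * x * (2 * j%:Z + 1)
  - y * (16 * k%:Z * (2 * j%:Z + 1) * (5 + 24 * j%:Z + 32 * j%:Z ^+ 2)
         + 64 * x * (2 * j%:Z + 1) - k%:Z)
  + k%:Z * A'.
(* the odd part of [m n] *)
pose B := ((2 * j + 1) * (2 * (2 ^ (N - 3) * k + j) + 1))%N.
have B_odd : odd B by rewrite oddM !odd_mul2S.
rewrite /cong2; suff -> : g n - (g m + l%:R - l%:R / (2 * m * n)%:R) =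
    (2 ^ N.+1)%:R * A%:~R / B%:R by exact: v2_ge_pow2_div_odd.
rewrite g_shift /g DE sign_m1 m1E /A /A' /B expnS (expn2_ge3 N3).
move: (2 ^ (N - 3))%N => T; rewrite mE.
field; rewrite !lt0r_neq0 //; have := ler0n rat k; have := ler0n rat T; have := ler0n rat j; nra.
Qed.

End ShiftCases.

Theorem lemma4p5 (N k m : nat) :
  (3 <= N)%N -> (0 < k)%N -> odd k -> (0 < m)%N ->
  let l := (k * 2 ^ N)%N in
  let n := (l + m)%N in
  [/\ odd m ->
        cong2 N (g n) (g m + (-1) ^+ ((m - 1) %/ 2)%N * (l%:R / 2)),
      (2 %| m)%N -> ~~ (4 %| m)%N ->
        cong2 N (g n) (g m + l%:R + l%:R / (2 * m * n)%:R)
    & (4 %| m)%N -> ~~ (8 %| m)%N ->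
        cong2 N (g n) (g m + l%:R - l%:R / (2 * m * n)%:R)].
Proof.
move=> N3 _ _ m_gt0 l n.
have [x g_shift] := g_add_pow2_mul k m N3 m_gt0.
split=> [m_odd | m_even m_not4 | m_4 m_not8].
- have [j mE] : exists j, m = (2 * j + 1)%N.
    by exists m./2; rewrite -[m in LHS]odd_double_half m_odd -mul2n addnC.
  have -> : ((m - 1) %/ 2 = j)%N by rewrite mE addnK mulKn.
  exact: cong2_odd N3 g_shift j mE.
- by apply: (cong2_2mod4 N3 g_shift (m %/ 4)); lia.
- by apply: (cong2_4mod8 N3 g_shift (m %/ 8)); lia.
Qed.
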